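(* Let $(X,\Sigma)$ be a locally finite test space and let $\mathrm{Pl}:E(X,\Sigma)\to D$ be a plausibility measure on it. If $\mathrm{Pl}$ is Archimedean, then $\mathrm{Pl}$ almost agrees with some probability measure $\mu$ on $(X,\Sigma)$. That is, there is a probability measure $\mu$ such that for all events $A,B$, $\mathrm{Pl}(A)\preceq\mathrm{Pl}(B)$ implies $\mu(A)\le\mu(B)$.
   Context: A test space $(X,\Sigma)$ is a set $X$ of outcomes together with a set $\Sigma\subseteq 2^X$ of subsets (called tests) with $\bigcup_{T\in\Sigma}T=X$. It is locally finite if every test is a finite set. An event is a subset of $X$ that is contained in some test, and $E(X,\Sigma)$ denotes the set of all events. A probability measure on $(X,\Sigma)$ is a function $\mu:X\to\mathbb{R}_{\ge0}$ with $\sum_{x\in T}\mu(x)=1$ for every $T\in\Sigma$. It is extended to events by $\mu(A)=\sum_{x\in A}\mu(x)$. A plausibility measure is a function $\mathrm{Pl}:E(X,\Sigma)\to D$, where $(D,\preceq)$ is a partially ordered set, satisfying three conditions: (i) $\mathrm{Pl}(T)=\mathrm{Pl}(R)$ for all $T,R\in\Sigma$; (ii) $A\subseteq B$ implies $\mathrm{Pl}(A)\preceq\mathrm{Pl}(B)$; (iii) $\mathrm{Pl}(\emptyset)\prec\mathrm{Pl}(T)$ for every $T\in\Sigma$. Here $a\prec b$ means $a\preceq b$ and $b\not\preceq a$. $\mathrm{Pl}$ is Archimedean if the following holds for every $n\ge1$ and every pair of finite families of events $(A_1,\dots,A_n)$ and $(B_1,\dots,B_n)$ such that each outcome $x\in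 X$ belongs to the same number of the $A_i$ as of the $B_i$ (counted with multiplicity): whenever $\mathrm{Pl}(A_i)\preceq\mathrm{Pl}(B_i)$ for all $i=1,\dots,n-1$, then $\mathrm{Pl}(A_n)\succeq\mathrm{Pl}(B_n)$. *)

From Stdlib Require Import Reals List Arith Classical ClassicalEpsilon.
Open Scope R_scope.

Definition set (X : Type) := X -> Prop.
Definition emptyset {X : Type} : set X := fun _ => False.
Definition subset {X : Type} (A B : set X) : Prop := forall x, A x -> B x.

Definition enumerates {X : Type} (l : list X) (A : set X) : Prop :=
  NoDup l /\ forall x, In x l <-> A x.

Definition test_space {X : Type} (Sigma : set (set X)) : Prop :=
  forall x : X, exists T, Sigma T /\ T x.

Definition locally_finite {X : Type} (Sigma : set (set X)) : Prop :=
  forall T, Sigma T -> exists l, enumerates l T.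

Definition event {X : Type} (Sigma : set (set X)) (A : set X) : Prop :=
  exists T, Sigma T /\ subset A T.

Definition sumR {X : Type} (mu : X -> R) (l : list X) : R :=
  fold_right (fun x acc => mu x + acc) 0 l.

Definition probability_measure {X : Type} (Sigma : set (set X)) (mu : X -> R) : Prop :=
  (forall x, 0 <= mu x) /\
  (forall T l, Sigma T -> enumerates l T -> sumR mu l = 1).

Definition partial_order {D : Type} (le : D -> D -> Prop) : Prop :=
  (forall a, le a a) /\
  (forall a b, le a b -> le b a -> a = b) /\
  (forall a b c, le a b -> le b c -> le a c).

Definition strict {D : Type} (le : D -> D -> Prop) (a b : D) : Prop :=
  le a b /\ ~ le b a.

(* Pl is a plausibility measure; only its values on events matter *)
Definition plausibility_measure {X D : Type} (Sigma : set (set X))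
    (le : D -> D -> Prop) (Pl : set X -> D) : Prop :=
  (forall T R, Sigma T -> Sigma R -> Pl T = Pl R) /\
  (forall A B, event Sigma A -> event Sigma B -> subset A B -> le (Pl A) (Pl B)) /\
  (forall T, Sigma T -> strict le (Pl emptyset) (Pl T)).

Fixpoint mult {X : Type} (x : X) (A : nat -> set X) (n : nat) : nat :=
  match n with
  | O => O
  | S k => (mult x A k + if excluded_middle_informative (A k x) then 1 else 0)%nat
  end.

(* Archimedean: families indexed by 0..n-1 (the paper's 1..n) *)
Definition archimedean {X D : Type} (Sigma : set (set X))
    (le : D -> D -> Prop) (Pl : set X -> D) : Prop :=
  forall (n : nat) (A B : nat -> set X),
    (1 <= n)%nat ->
    (forall i, (i < n)%nat -> event Sigma (A i) /\ event Sigma (B i)) ->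
    (forall x, mult x A n = mult x B n) ->
    (forall i, (i < n - 1)%nat -> le (Pl (A i)) (Pl (B i))) ->
    le (Pl (B (n - 1)%nat)) (Pl (A (n - 1)%nat)).

(* The functions [1_B - 1_A] with [Pl A <= Pl B] span an additive cone of real functions
   on [X], and the Archimedean property says precisely that this cone contains no negative
   multiple of the indicator [u] of a test.  By Zorn's lemma it extends to a maximal such
   cone, and maximality makes it total: it contains [g] or [-g] for every [g].  Comparing a
   [u]-bounded function [g] with the rational multiples of [u] in the resulting preorder
   defines a Dedekind cut, whose value is additive, monotone for the cone and equal to [1]
   at [u].  Its values on singletons form the required probability measure. *)

From Stdlib Require Import Reals List Lra Lia ZArith.
From Stdlib Require Import FunctionalExtensionality Classical ClassicalEpsilon.
From mathcomp Require classical_sets.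
Open Scope R_scope.

(** * Rational numbers *)

Lemma frac_le_iff (a b m n : Z) : (0 < b)%Z -> (0 < n)%Z ->
  IZR a / IZR b <= IZR m / IZR n <-> (a * n <= m * b)%Z.
Proof.
intros hb hn. apply IZR_lt in hb, hn.
assert (hbn : 0 < IZR b * IZR n) by (apply Rmult_lt_0_compat; lra).
assert (Ea : IZR a / IZR b * (IZR b * IZR n) = IZR (a * n)) by (rewrite mult_IZR; field; lra).
assert (Em : IZR m / IZR n * (IZR b * IZR n) = IZR (m * b)) by (rewrite mult_IZR; field; lra).
split; intros h.
- apply le_IZR. rewrite <- Ea, <- Em. apply Rmult_le_compat_r; lra.
- apply (Rmult_le_reg_r _ _ _ hbn). rewrite Ea, Em. now apply IZR_le.
Qed.

Lemma frac_lt_iff (a b m n : Z) : (0 < b)%Z -> (0 < n)%Z ->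
  IZR a / IZR b < IZR m / IZR n <-> (a * n < m * b)%Z.
Proof.
intros hb hn. pose proof (frac_le_iff m n a b hn hb) as hle. split; intros h.
- apply Z.nle_gt. intros h'. apply hle in h'. lra.
- apply Rnot_le_lt. intros h'. apply hle in h'. lia.
Qed.

Definition rational (q : R) : Prop :=
  exists m n : Z, (0 < n)%Z /\ q = IZR m / IZR n.

Lemma rational_add q r : rational q -> rational r -> rational (q + r).
Proof.
intros (m & n & hn & ->) (m' & n' & hn' & ->).
exists (m * n' + m' * n)%Z, (n * n')%Z. split; [lia|].
apply IZR_lt in hn, hn'. rewrite plus_IZR, !mult_IZR. field; lra.
Qed.

Lemma rational_opp q : rational q -> rational (- q).
Proof.
intros (m & n & hn & ->). exists (- m)%Z, n. split; [lia|].
apply IZR_lt in hn. rewrite opp_IZR. field; lra.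
Qed.

Lemma rational_between a b : a < b -> exists q, rational q /\ a < q < b.
Proof.
intros hab.
set (n := up (/ (b - a))).
destruct (archimed (/ (b - a))) as [hn _].
assert (0 < / (b - a)) by (apply Rinv_0_lt_compat; lra).
assert (hn0 : 0 < IZR n) by (fold n in hn; lra).
destruct (archimed (IZR n * a)) as [h1 h2].
exists (IZR (up (IZR n * a)) / IZR n). split; [|split].
- exists (up (IZR n * a)), n. split; [apply lt_IZR; lra|reflexivity].
- apply (Rmult_lt_reg_r (IZR n)); [lra|]. field_simplify; lra.
- apply (Rmult_lt_reg_r (IZR n)); [lra|]. field_simplify; [|lra].
  assert (1 < IZR n * (b - a)).
  { fold n in hn. apply (Rmult_lt_compat_r (b - a)) in hn; [|lra].
    rewrite Rinv_l in hn; lra. }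
  lra.
Qed.

(** * Cones of real functions and their cut values *)

Lemma transport_pointwise {X : Type} (P : (X -> R) -> Prop) (g h : X -> R) :
  P g -> (forall y, g y = h y) -> P h.
Proof. intros Pg e. replace h with g; [exact Pg|]. now apply functional_extensionality. Qed.

Definition add_closed {X : Type} (C : (X -> R) -> Prop) : Prop :=
  forall g h, C g -> C h -> C (fun y => g y + h y).

Definition avoids_neg_multiples {X : Type} (u : X -> R) (C : (X -> R) -> Prop) : Prop :=
  forall z, (z < 0)%Z -> ~ C (fun y => IZR z * u y).

Lemma add_closed_scale {X : Type} (C : (X -> R) -> Prop) :
  add_closed C -> C (fun _ => 0) ->
  forall g z, (0 <= z)%Z -> C g -> C (fun y => IZR z * g y).
Proof.
intros Cadd C0 g z hz Cg. revert z hz. apply natlike_ind.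
- apply (transport_pointwise _ _ _ C0). intros y. ring.
- intros z _ IH. apply (transport_pointwise _ _ _ (Cadd _ _ IH Cg)).
  intros y. rewrite succ_IZR. ring.
Qed.

Definition total_cone {X : Type} (u : X -> R) (M : (X -> R) -> Prop) : Prop :=
  add_closed M /\ avoids_neg_multiples u M /\ forall g, M g \/ M (fun y => - g y).

Section TotalCone.

Context {X : Type} (u : X -> R) (M : (X -> R) -> Prop).
Hypothesis M_total_cone : total_cone u M.

Lemma total_cone_add : add_closed M.
Proof. apply M_total_cone. Qed.

Lemma total_cone_avoids : avoids_neg_multiples u M.
Proof. apply M_total_cone. Qed.

Lemma total_cone_dichotomy g : M g \/ M (fun y => - g y).
Proof. apply M_total_cone. Qed.

Lemma total_cone_zero : M (fun _ => 0).
Proof.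
destruct (total_cone_dichotomy (fun _ => 0)) as [h|h]; [exact h|].
apply (transport_pointwise _ _ _ h). intros y. ring.
Qed.

Lemma total_cone_scale g z : (0 <= z)%Z -> M g -> M (fun y => IZR z * g y).
Proof. apply add_closed_scale; [exact total_cone_add|exact total_cone_zero]. Qed.

Lemma total_cone_multiple_u z : M (fun y => IZR z * u y) <-> (0 <= z)%Z.
Proof.
split.
- intros h. destruct (Z.le_gt_cases 0 z) as [hz|hz]; [exact hz|].
  exfalso. exact (total_cone_avoids z hz h).
- intros hz. apply total_cone_scale; [exact hz|].
  destruct (total_cone_dichotomy u) as [h|h]; [exact h|].
  exfalso. apply (total_cone_avoids (-1)%Z ltac:(lia)).
  apply (transport_pointwise _ _ _ h). intros y. ring.
Qed.

(* [below g q] says [q u <= g] in the preorder of [M], for a rational [q]. *)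
Definition below (g : X -> R) (q : R) : Prop :=
  exists m n : Z, (0 < n)%Z /\ q = IZR m / IZR n /\
    M (fun y => IZR n * g y - IZR m * u y).

Lemma below_add g h q r :
  below g q -> below h r -> below (fun y => g y + h y) (q + r).
Proof.
intros (m & n & hn & -> & Mg) (m' & n' & hn' & -> & Mh).
exists (m * n' + m' * n)%Z, (n * n')%Z. split; [lia|split].
- apply IZR_lt in hn, hn'. rewrite plus_IZR, !mult_IZR. field; lra.
- apply (transport_pointwise _ _ _ (total_cone_add _ _
    (total_cone_scale _ n' ltac:(lia) Mg) (total_cone_scale _ n ltac:(lia) Mh))).
  intros y. rewrite plus_IZR, !mult_IZR. ring.
Qed.

Lemma below_zero q : below (fun _ => 0) q -> q <= 0.
Proof.
intros (m & n & hn & -> & h).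
assert (hm : (0 <= - m)%Z).
{ apply total_cone_multiple_u, (transport_pointwise _ _ _ h).
  intros y. rewrite opp_IZR. ring. }
replace 0 with (IZR 0 / IZR 1) by (field; lra).
apply frac_le_iff; lia.
Qed.

Lemma below_opp_nonpos g q r : below g q -> below (fun y => - g y) r -> q + r <= 0.
Proof.
intros hq hr. apply below_zero.
apply (transport_pointwise (fun f => below f (q + r)) _ _ (below_add _ _ _ _ hq hr)).
intros y. ring.
Qed.

Lemma below_mono g q r : below g q -> rational r -> r <= q -> below g r.
Proof.
intros (m & n & hn & -> & Mg) (a & b & hb & ->) hle.
apply frac_le_iff in hle; [|exact hb|exact hn].
exists (a * n)%Z, (b * n)%Z. split; [lia|split].
- apply IZR_lt in hn, hb. rewrite !mult_IZR. field; lra.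
- apply (transport_pointwise _ _ _
    (total_cone_add _ _ (total_cone_scale _ b ltac:(lia) Mg)
       (proj2 (total_cone_multiple_u (m * b - a * n)) ltac:(lia)))).
  intros y. rewrite minus_IZR, !mult_IZR. ring.
Qed.

Lemma below_total g q : rational q -> below g q \/ below (fun y => - g y) (- q).
Proof.
intros (m & n & hn & ->).
destruct (total_cone_dichotomy (fun y => IZR n * g y - IZR m * u y)) as [h|h].
- left. now exists m, n.
- right. exists (- m)%Z, n. split; [exact hn|split].
  + apply IZR_lt in hn. rewrite opp_IZR. field; lra.
  + apply (transport_pointwise _ _ _ h). intros y. rewrite opp_IZR. ring.
Qed.

(* [c] separates the rationals [q] with [q u <= g] from those with [g <= q u]. *)
Definition is_cut (g : X -> R) (c : R) : Prop :=
  forall q, rational q -> (q < c -> below g q) /\ (c < q -> below (fun y => - g y) (- q)).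

Lemma cut_le g c d : is_cut g c -> is_cut g d -> d <= c.
Proof.
intros hc hd. apply Rnot_lt_le. intros hlt.
destruct (rational_between c d hlt) as (q & rq & hcq & hqd).
destruct (rational_between q d hqd) as (r & rr & hqr & hrd).
pose proof (below_opp_nonpos _ _ _ (proj1 (hd r rr) hrd) (proj2 (hc q rq) hcq)). lra.
Qed.

Lemma cut_unique g c d : is_cut g c -> is_cut g d -> c = d.
Proof. intros hc hd. apply Rle_antisym; eapply cut_le; eassumption. Qed.

Lemma cut_add g h c d : is_cut g c -> is_cut h d -> is_cut (fun y => g y + h y) (c + d).
Proof.
intros hc hd q rq. split; intros hlt.
- destruct (rational_between (q - d) c ltac:(lra)) as (r & rr & h1 & h2).
  assert (rqr : rational (q - r)) by (apply rational_add; [|apply rational_opp]; assumption).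
  replace q with (r + (q - r)) by ring.
  apply below_add; [apply hc|apply hd]; auto; lra.
- destruct (rational_between c (q - d) ltac:(lra)) as (r & rr & h1 & h2).
  assert (rqr : rational (q - r)) by (apply rational_add; [|apply rational_opp]; assumption).
  replace (- q) with (- r + - (q - r)) by ring.
  apply (transport_pointwise (fun f => below f _) _ _
    (below_add _ _ _ _ (proj2 (hc r rr) h1) (proj2 (hd (q - r) rqr) ltac:(lra)))).
  intros y. ring.
Qed.

Lemma cut_nonneg g c : M g -> is_cut g c -> 0 <= c.
Proof.
intros Mg hc. apply Rnot_lt_le. intros hlt.
destruct (rational_between c 0 hlt) as (q & rq & h1 & h2).
assert (hg : below g 0).
{ exists 0%Z, 1%Z. split; [lia|split]; [field|].
  apply (transport_pointwise _ _ _ Mg). intros y. ring. }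
pose proof (below_opp_nonpos _ _ _ hg (proj2 (hc q rq) h1)). lra.
Qed.

Lemma cut_multiple_u z : is_cut (fun y => IZR z * u y) (IZR z).
Proof.
intros q rq. destruct rq as (m & n & hn & ->). split; intros hlt.
- replace (IZR z) with (IZR z / IZR 1) in hlt by field.
  apply frac_lt_iff in hlt; [|exact hn|lia].
  exists m, n. split; [exact hn|split; [reflexivity|]].
  apply (transport_pointwise _ _ _ (proj2 (total_cone_multiple_u (n * z - m)) ltac:(lia))).
  intros y. rewrite minus_IZR, mult_IZR. ring.
- replace (IZR z) with (IZR z / IZR 1) in hlt by field.
  apply frac_lt_iff in hlt; [|lia|exact hn].
  exists (- m)%Z, n. split; [exact hn|split].
  + apply IZR_lt in hn. rewrite opp_IZR. field; lra.
  + apply (transport_pointwise _ _ _ (proj2 (total_cone_multiple_u (m - n * z)) ltac:(lia))).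
    intros y. rewrite minus_IZR, mult_IZR, opp_IZR. ring.
Qed.

Definition order_bounded (g : X -> R) : Prop :=
  exists q r, below g q /\ below (fun y => - g y) r.

Lemma cut_exists g : order_bounded g -> exists c, is_cut g c.
Proof.
intros (q0 & r0 & hq0 & hr0).
assert (hbound : bound (below g)).
{ exists (- r0). intros q hq. pose proof (below_opp_nonpos _ _ _ hq hr0). lra. }
destruct (completeness (below g) hbound (ex_intro _ q0 hq0)) as [c [hub hlub]].
exists c. intros q rq. split; intros hlt.
- apply NNPP. intros hnot. apply (Rlt_not_le _ _ hlt), hlub.
  intros r hr. apply Rnot_lt_le. intros hqr. apply hnot.
  apply (below_mono _ _ _ hr rq). lra.
- destruct (below_total g q rq) as [h|h]; [|exact h].
  specialize (hub q h). lra.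
Qed.

Definition cut_value (g : X -> R) : R := epsilon (inhabits 0) (is_cut g).

Lemma cut_value_is_cut g : order_bounded g -> is_cut g (cut_value g).
Proof. intros hg. unfold cut_value. apply epsilon_spec, cut_exists, hg. Qed.

Lemma cut_value_eq g c : is_cut g c -> cut_value g = c.
Proof.
intros hc. apply (cut_unique g); [|exact hc].
unfold cut_value. apply epsilon_spec. now exists c.
Qed.

Lemma order_bounded_add g h :
  order_bounded g -> order_bounded h -> order_bounded (fun y => g y + h y).
Proof.
intros (q & r & hq & hr) (q' & r' & hq' & hr'). exists (q + q'), (r + r'). split.
- now apply below_add.
- apply (transport_pointwise (fun f => below f _) _ _ (below_add _ _ _ _ hr hr')).
  intros y. ring.
Qed.

Lemma order_bounded_opp g : order_bounded g -> order_bounded (fun y => - g y).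
Proof.
intros (q & r & hq & hr). exists r, q. split; [exact hr|].
apply (transport_pointwise (fun f => below f _) _ _ hq). intros y. ring.
Qed.

Lemma order_bounded_between g : M g -> M (fun y => u y - g y) -> order_bounded g.
Proof.
intros hg hug. exists 0, (-1). split.
- exists 0%Z, 1%Z. split; [lia|split; [field|]].
  apply (transport_pointwise _ _ _ hg). intros y. ring.
- exists (-1)%Z, 1%Z. split; [lia|split; [field|]].
  apply (transport_pointwise _ _ _ hug). intros y. ring.
Qed.

Lemma cut_value_add g h : order_bounded g -> order_bounded h ->
  cut_value (fun y => g y + h y) = cut_value g + cut_value h.
Proof. intros hg hh. apply cut_value_eq, cut_add; now apply cut_value_is_cut. Qed.

Lemma cut_value_mono g h : order_bounded g -> order_bounded h ->
  M (fun y => h y - g y) -> cut_value g <= cut_value h.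
Proof.
intros hg hh hM.
assert (hd : order_bounded (fun y => h y - g y))
  by (apply order_bounded_add; [|apply order_bounded_opp]; assumption).
assert (E : cut_value h = cut_value g + cut_value (fun y => h y - g y)).
{ rewrite <- cut_value_add by assumption. f_equal.
  apply functional_extensionality. intros y. ring. }
pose proof (cut_nonneg _ _ hM (cut_value_is_cut _ hd)). lra.
Qed.

Lemma cut_value_multiple_u z : cut_value (fun y => IZR z * u y) = IZR z.
Proof. apply cut_value_eq, cut_multiple_u. Qed.

Lemma cut_value_sumR {A : Type} (e : A -> X -> R) (l : list A) :
  (forall a, In a l -> order_bounded (e a)) ->
  order_bounded (fun y => sumR (fun a => e a y) l) /\
  cut_value (fun y => sumR (fun a => e a y) l) = sumR (fun a => cut_value (e a)) l.
Proof.
induction l as [|a l IH]; intros hb; simpl.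
- split.
  + apply order_bounded_between; [exact total_cone_zero|].
    apply (transport_pointwise _ _ _ (proj2 (total_cone_multiple_u 1) ltac:(lia))).
    intros y. ring.
  + replace (fun _ : X => 0) with (fun y => IZR 0 * u y)
      by (apply functional_extensionality; intros y; ring).
    apply cut_value_multiple_u.
- destruct IH as [IHb IHv]; [intros b hbl; apply hb; now right|].
  assert (ha : order_bounded (e a)) by (apply hb; now left).
  split; [now apply order_bounded_add|].
  rewrite cut_value_add by assumption. now rewrite IHv.
Qed.

End TotalCone.

(** * Maximal cones *)

Definition maximal_cone {X : Type} (u : X -> R) (M : (X -> R) -> Prop) : Prop :=
  add_closed M /\ avoids_neg_multiples u M /\
  forall B, add_closed B -> avoids_neg_multiples u B ->
    (forall g, M g -> B g) -> forall g, B g -> M g.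

Lemma maximal_cone_exists {X : Type} (u : X -> R) (P0 : (X -> R) -> Prop) :
  add_closed P0 -> avoids_neg_multiples u P0 ->
  exists M, (forall g, P0 g -> M g) /\ maximal_cone u M.
Proof.
intros P0add P0avoid.
(* Zorn is applied to the sets [S] for which [S] together with [P0] is a cone, so that
   the union of the empty chain qualifies. *)
set (ok := fun S : (X -> R) -> Prop =>
  add_closed (fun g => S g \/ P0 g) /\ avoids_neg_multiples u (fun g => S g \/ P0 g)).
destruct (@classical_sets.Zorn_bigcup (X -> R) ok) as [A [okA maxA]].
- intros F Fok Fchain.
  assert (pair_in_one : forall g h,
    (exists2 S, F S & S g) \/ P0 g -> (exists2 S, F S & S h) \/ P0 h ->
    (P0 g /\ P0 h) \/ exists2 S, F S & (S g \/ P0 g) /\ (S h \/ P0 h)).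
  { intros g h [[S FS Sg]|P0g] [[S' FS' S'h]|P0h]; auto.
    - right. destruct (Fchain S S' FS FS') as [sub|sub]; [exists S'|exists S]; auto.
    - right. exists S; auto.
    - right. exists S'; auto. }
  split.
  + intros g h hg hh. destruct (pair_in_one g h hg hh) as [[P0g P0h]|[S FS [Sg Sh]]].
    * right. now apply P0add.
    * destruct (proj1 (Fok S FS) g h Sg Sh) as [Sgh|P0gh]; [left; now exists S|now right].
  + intros z hz [[S FS Sz]|P0z].
    * apply (proj2 (Fok S FS) z hz). now left.
    * exact (P0avoid z hz P0z).
- exists (fun g => A g \/ P0 g). split; [now right|].
  destruct okA as [Madd Mavoid]. split; [exact Madd|split; [exact Mavoid|]].
  intros B Badd Bavoid MB g Bg. apply NNPP. intros notMg.
  apply (maxA B).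
  + split; [intros f Af; apply MB; now left|].
    intros BA. apply notMg. left. now apply BA.
  + split.
    * intros f h [Bf|P0f] [Bh|P0h]; left; apply Badd; auto.
    * intros z hz [Bz|P0z]; [exact (Bavoid z hz Bz)|exact (Bavoid z hz (MB _ (or_intror P0z)))].
Qed.

Lemma maximal_cone_escape {X : Type} (u : X -> R) (M : (X -> R) -> Prop) g :
  maximal_cone u M -> M (fun _ => 0) -> ~ M g ->
  exists p k z, M p /\ (0 < k)%Z /\ (z < 0)%Z /\ forall y, p y + IZR k * g y = IZR z * u y.
Proof.
intros (Madd & Mavoid & Mmax) M0 notMg.
set (B := fun f => exists p k, M p /\ (0 <= k)%Z /\ forall y, f y = p y + IZR k * g y).
apply NNPP. intros noescape. apply notMg, (Mmax B).
- intros f h (p & k & Mp & hk & ef) (p' & k' & Mp' & hk' & eh).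
  exists (fun y => p y + p' y), (k + k')%Z. split; [now apply Madd|split; [lia|]].
  intros y. rewrite ef, eh, plus_IZR. ring.
- intros z hz (p & k & Mp & hk & e).
  destruct (Z.eq_dec k 0) as [->|hk0].
  + apply (Mavoid z hz), (transport_pointwise _ _ _ Mp). intros y. rewrite e. ring.
  + apply noescape. exists p, k, z. split; [exact Mp|split; [lia|split; [exact hz|]]].
    intros y. now rewrite e.
- intros f Mf. exists f, 0%Z. split; [exact Mf|split; [lia|]]. intros y. ring.
- exists (fun _ => 0), 1%Z. split; [exact M0|split; [lia|]]. intros y. ring.
Qed.

Lemma maximal_cone_total {X : Type} (u : X -> R) (M : (X -> R) -> Prop) :
  maximal_cone u M -> M (fun _ => 0) -> total_cone u M.
Proof.
intros hM M0. split; [apply hM|split; [apply hM|]].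
intros g. apply NNPP. intros hnot.
destruct (maximal_cone_escape u M g hM M0 (fun h => hnot (or_introl h)))
  as (p & k & z & Mp & hk & hz & e).
destruct (maximal_cone_escape u M (fun y => - g y) hM M0 (fun h => hnot (or_intror h)))
  as (q & l & w & Mq & hl & hw & e').
destruct hM as (Madd & Mavoid & _).
(* Eliminating [g] between the two escapes yields a negative multiple of [u] in [M]. *)
apply (Mavoid (l * z + k * w)%Z ltac:(nia)).
apply (transport_pointwise _ _ _
  (Madd _ _ (add_closed_scale M Madd M0 p l ltac:(lia) Mp)
            (add_closed_scale M Madd M0 q k ltac:(lia) Mq))).
intros y. specialize (e y). specialize (e' y).
rewrite plus_IZR, !mult_IZR, Rmult_plus_distr_r, !Rmult_assoc, <- e, <- e'. ring.
Qed.

(** * The plausibility cone *)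

Definition indicator {X : Type} (A : set X) (y : X) : R :=
  if excluded_middle_informative (A y) then 1 else 0.

Lemma indicator_empty {X : Type} (y : X) : indicator emptyset y = 0.
Proof. unfold indicator. destruct excluded_middle_informative as [[]|_]. reflexivity. Qed.

Lemma sumR_app {A : Type} (f : A -> R) l l' : sumR f (l ++ l') = sumR f l + sumR f l'.
Proof. induction l as [|a l IH]; simpl; [ring|]. rewrite IH. ring. Qed.

Lemma sumR_minus {A : Type} (f g : A -> R) l :
  sumR (fun a => f a - g a) l = sumR f l - sumR g l.
Proof. induction l as [|a l IH]; simpl; [ring|]. rewrite IH. ring. Qed.

Lemma sumR_repeat {A : Type} (f : A -> R) a k : sumR f (repeat a k) = INR k * f a.
Proof.
induction k as [|k IH]; simpl repeat; simpl sumR; [simpl; ring|].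
rewrite IH, S_INR. ring.
Qed.

Lemma sumR_indicator_points {X : Type} (l : list X) (y : X) : NoDup l ->
  sumR (fun x => indicator (eq x) y) l = indicator (fun y' => In y' l) y.
Proof.
induction l as [|a l IH]; intros hl; simpl.
- unfold indicator. destruct excluded_middle_informative as [[]|_]. reflexivity.
- inversion_clear hl as [|? ? a_notin hl']. rewrite IH by exact hl'.
  unfold indicator.
  destruct (excluded_middle_informative (a = y)) as [<-|ne];
    destruct (excluded_middle_informative (In _ l));
    destruct (excluded_middle_informative (a = _ \/ In _ l)); try ring; tauto.
Qed.

Lemma indicator_enumerates {X : Type} (l : list X) (A : set X) : enumerates l A ->
  forall y, indicator A y = sumR (fun x => indicator (eq x) y) l.
Proof.
intros [hnd hin] y. rewrite sumR_indicator_points by exact hnd.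
unfold indicator.
destruct (excluded_middle_informative (A y)); destruct (excluded_middle_informative (In y l));
  try reflexivity; exfalso; firstorder.
Qed.

Lemma mult_ext {X : Type} (x : X) (A A' : nat -> set X) n :
  (forall i, (i < n)%nat -> A i = A' i) -> mult x A n = mult x A' n.
Proof.
induction n as [|n IH]; intros h; simpl; [reflexivity|].
rewrite IH by (intros i hi; apply h; lia). now rewrite h by lia.
Qed.

Lemma mult_nth {X A : Type} (x : X) (F : A -> set X) (d : A) (L : list A) :
  INR (mult x (fun i => F (nth i L d)) (length L)) = sumR (fun a => indicator (F a) x) L.
Proof.
induction L as [|a L IH] using rev_ind; [reflexivity|].
rewrite length_app, Nat.add_1_r. simpl mult.
rewrite (mult_ext x _ (fun i => F (nth i L d)))
  by (intros i hi; now rewrite app_nth1).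
rewrite plus_INR, IH, sumR_app, nth_middle. simpl. unfold indicator.
destruct excluded_middle_informative; simpl; ring.
Qed.

Section PlausibilityCone.

Context {X D : Type} (Sigma : set (set X)) (le : D -> D -> Prop) (Pl : set X -> D).

Definition ordered_pair (p : set X * set X) : Prop :=
  event Sigma (fst p) /\ event Sigma (snd p) /\ le (Pl (fst p)) (Pl (snd p)).

Definition pair_gain (p : set X * set X) (y : X) : R := indicator (snd p) y - indicator (fst p) y.

Definition plausibility_cone (g : X -> R) : Prop :=
  exists L, Forall ordered_pair L /\ forall y, g y = sumR (fun p => pair_gain p y) L.

Lemma plausibility_cone_add_closed : add_closed plausibility_cone.
Proof.
intros g h (L & hL & eg) (L' & hL' & eh). exists (L ++ L'). split.
- now apply Forall_app.
- intros y. now rewrite sumR_app, eg, eh.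
Qed.

Lemma plausibility_cone_zero : plausibility_cone (fun _ => 0).
Proof. now exists nil. Qed.

Lemma plausibility_cone_pair p : ordered_pair p -> plausibility_cone (pair_gain p).
Proof. intros hp. exists (p :: nil). split; [now constructor|]. intros y. simpl. ring. Qed.

Lemma archimedean_pairs L p :
  archimedean Sigma le Pl -> Forall ordered_pair L ->
  event Sigma (fst p) -> event Sigma (snd p) ->
  (forall x, sumR (fun q => indicator (fst q) x) (L ++ p :: nil) =
             sumR (fun q => indicator (snd q) x) (L ++ p :: nil)) ->
  le (Pl (snd p)) (Pl (fst p)).
Proof.
intros Harch hL hp1 hp2 hsum.
assert (hnth : forall i, (i < length L)%nat -> ordered_pair (nth i (L ++ p :: nil) p)).
{ intros i hi. rewrite app_nth1 by exact hi.
  apply (proj1 (Forall_forall _ _) hL), nth_In, hi. }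
assert (hlast : nth (length (L ++ p :: nil) - 1) (L ++ p :: nil) p = p).
{ rewrite length_app, Nat.add_sub. apply nth_middle. }
pose proof (Harch (length (L ++ p :: nil))
  (fun i => fst (nth i (L ++ p :: nil) p)) (fun i => snd (nth i (L ++ p :: nil) p))) as H.
cbv beta in H. rewrite hlast in H. apply H; clear H.
- rewrite length_app. simpl. lia.
- intros i hi. rewrite length_app in hi. simpl in hi.
  destruct (Nat.lt_ge_cases i (length L)) as [lt|ge].
  + destruct (hnth i lt) as (h1 & h2 & _). auto.
  + replace i with (length L) by lia. rewrite nth_middle. auto.
- intros x. apply INR_eq. rewrite !mult_nth. apply hsum.
- intros i hi. rewrite length_app, Nat.add_sub in hi. apply hnth, hi.
Qed.

Lemma plausibility_cone_avoids T0 :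
  plausibility_measure Sigma le Pl -> archimedean Sigma le Pl -> Sigma T0 ->
  avoids_neg_multiples (indicator T0) plausibility_cone.
Proof.
intros (_ & Pl_mono & Pl_strict) Harch hT0 z hz (L & hL & eL).
assert (ev0 : event Sigma emptyset) by (exists T0; split; [exact hT0|intros x []]).
assert (evT0 : event Sigma T0) by (exists T0; split; [exact hT0|intros x hx; exact hx]).
set (p := (@emptyset X, T0)).
assert (hp : ordered_pair p) by (repeat split; auto; apply Pl_mono; auto; intros x []).
(* Appending [-z] copies of [(emptyset, T0)] balances the multiplicities, so the
   Archimedean property forces [Pl T0 <= Pl emptyset]. *)
set (k := Z.to_nat (- z)).
apply (proj2 (Pl_strict T0 hT0)).
apply (archimedean_pairs (L ++ repeat p (k - 1)) p Harch); [|exact ev0|exact evT0|].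
- apply Forall_app. split; [exact hL|]. apply Forall_forall. intros q hq.
  apply repeat_spec in hq. now subst.
- intros x. apply Rminus_diag_uniq_sym.
  rewrite <- sumR_minus, !sumR_app, sumR_repeat. simpl.
  specialize (eL x). unfold pair_gain in eL. rewrite <- eL, indicator_empty.
  replace (INR (k - 1)) with (- IZR z - 1).
  + ring.
  + unfold k. rewrite minus_INR, INR_IZR_INZ, Z2Nat.id by lia. simpl. rewrite opp_IZR. ring.
Qed.

End PlausibilityCone.

Section Representation.

Context {X D : Type} (Sigma : set (set X)) (le : D -> D -> Prop) (Pl : set X -> D).
Context (T0 : set X) (M : (X -> R) -> Prop).
Hypothesis covers : test_space Sigma.
Hypothesis Pl_plausibility : plausibility_measure Sigma le Pl.
Hypothesis le_refl : forall a, le a a.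
Hypothesis T0_test : Sigma T0.
Hypothesis M_extends : forall g, plausibility_cone Sigma le Pl g -> M g.
Hypothesis M_maximal : maximal_cone (indicator T0) M.

Lemma extension_total_cone : total_cone (indicator T0) M.
Proof. apply maximal_cone_total; [exact M_maximal|apply M_extends, plausibility_cone_zero]. Qed.

Lemma extension_ordered A B : event Sigma A -> event Sigma B -> le (Pl A) (Pl B) ->
  M (fun y => indicator B y - indicator A y).
Proof.
intros hA hB hle. apply M_extends, (plausibility_cone_pair _ _ _ (A, B)). now repeat split.
Qed.

Lemma event_order_bounded A : event Sigma A -> order_bounded (indicator T0) M (indicator A).
Proof.
intros hA. pose proof hA as (T & hT & hAT).
destruct Pl_plausibility as (Pl_test & Pl_mono & _).
assert (evT : event Sigma T) by (exists T; split; [exact hT|now intros x]).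
assert (evT0 : event Sigma T0) by (exists T0; split; [exact T0_test|now intros x]).
assert (ev0 : event Sigma emptyset) by (exists T; split; [exact hT|intros x []]).
assert (M0A := extension_ordered emptyset A ev0 hA (Pl_mono _ _ ev0 hA (fun x (h : False) => False_ind _ h))).
assert (MAT := extension_ordered A T hA evT (Pl_mono _ _ hA evT hAT)).
assert (MTT0 : M (fun y => indicator T0 y - indicator T y)).
{ apply extension_ordered; [exact evT|exact evT0|].
  rewrite (Pl_test T T0 hT T0_test). apply le_refl. }
apply order_bounded_between.
- apply (transport_pointwise _ _ _ M0A). intros y. rewrite indicator_empty. ring.
- apply (transport_pointwise _ _ _ (total_cone_add _ _ extension_total_cone _ _ MAT MTT0)).
  intros y. ring.
Qed.

Definition cone_measure (x : X) : R := cut_value (indicator T0) M (indicator (eq x)).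

Lemma point_event x : event Sigma (eq x).
Proof. destruct (covers x) as (T & hT & hx). exists T. split; [exact hT|now intros y <-]. Qed.

Lemma cut_value_event A l : event Sigma A -> enumerates l A ->
  cut_value (indicator T0) M (indicator A) = sumR cone_measure l.
Proof.
intros hA hl.
replace (indicator A) with (fun y => sumR (fun x => indicator (eq x) y) l)
  by (apply functional_extensionality; intros y; symmetry; now apply indicator_enumerates).
apply cut_value_sumR; [exact extension_total_cone|].
intros x _. apply event_order_bounded, point_event.
Qed.

Lemma cut_value_event_mono A B : event Sigma A -> event Sigma B -> le (Pl A) (Pl B) ->
  cut_value (indicator T0) M (indicator A) <= cut_value (indicator T0) M (indicator B).
Proof.
intros hA hB hle.
apply cut_value_mono; [exact extension_total_cone|apply event_order_bounded..|]; auto.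
now apply extension_ordered.
Qed.

Lemma cut_value_test T : Sigma T -> cut_value (indicator T0) M (indicator T) = 1.
Proof.
intros hT. destruct Pl_plausibility as (Pl_test & _ & _).
assert (evT : forall T', Sigma T' -> event Sigma T')
  by (intros T' h; exists T'; split; [exact h|now intros x]).
assert (E : cut_value (indicator T0) M (indicator T0) = 1).
{ rewrite <- (cut_value_multiple_u (indicator T0) M extension_total_cone 1). f_equal.
  apply functional_extensionality. intros y. ring. }
rewrite <- E. apply Rle_antisym; apply cut_value_event_mono; auto;
  rewrite (Pl_test T T0 hT T0_test); apply le_refl.
Qed.

Lemma cone_measure_nonneg x : 0 <= cone_measure x.
Proof.
destruct (covers x) as (T & hT & _).
assert (ev0 : event Sigma emptyset) by (exists T; split; [exact hT|intros y []]).
assert (e0 : enumerates nil (@emptyset X)) by (split; [constructor|intros y; split; intros []]).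
replace 0 with (sumR cone_measure nil) by reflexivity.
rewrite <- (cut_value_event emptyset nil ev0 e0).
apply cut_value_event_mono; [exact ev0|apply point_event|].
apply (proj1 (proj2 Pl_plausibility)); [exact ev0|apply point_event|intros y []].
Qed.

Lemma cone_measure_represents :
  probability_measure Sigma cone_measure /\
  (forall (A B : set X) (lA lB : list X),
      event Sigma A -> event Sigma B -> enumerates lA A -> enumerates lB B ->
      le (Pl A) (Pl B) -> sumR cone_measure lA <= sumR cone_measure lB).
Proof.
split; [split|].
- exact cone_measure_nonneg.
- intros T l hT hl. rewrite <- (cut_value_event T l); [now apply cut_value_test| |exact hl].
  exists T. split; [exact hT|now intros x].
- intros A B lA lB hA hB eA eB hle.
  rewrite <- (cut_value_event A lA hA eA), <- (cut_value_event B lB hB eB).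
  now apply cut_value_event_mono.
Qed.

End Representation.

Theorem theorem2 (X D : Type) (Sigma : set (set X))
  (le : D -> D -> Prop) (Pl : set X -> D) :
  test_space Sigma ->
  locally_finite Sigma ->
  partial_order le ->
  plausibility_measure Sigma le Pl ->
  archimedean Sigma le Pl ->
  exists mu : X -> R,
    probability_measure Sigma mu /\
    (forall (A B : set X) (lA lB : list X),
        event Sigma A -> event Sigma B ->
        enumerates lA A -> enumerates lB B ->
        le (Pl A) (Pl B) -> sumR mu lA <= sumR mu lB).
Proof.
intros covers _ (le_refl & _ & _) Pl_plausibility Harch.
destruct (classic (exists T0, Sigma T0)) as [[T0 T0_test]|no_test].
- destruct (maximal_cone_exists (indicator T0) (plausibility_cone Sigma le Pl)
    (plausibility_cone_add_closed Sigma le Pl)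
    (plausibility_cone_avoids Sigma le Pl T0 Pl_plausibility Harch T0_test))
    as (M & M_extends & M_maximal).
  exists (cone_measure T0 M).
  exact (cone_measure_represents Sigma le Pl T0 M covers Pl_plausibility le_refl T0_test
           M_extends M_maximal).
- exists (fun _ => 0). repeat split.
  + intros x. apply Rle_refl.
  + intros T l hT. exfalso. eauto.
  + intros A B lA lB (T & hT & _). exfalso. eauto.
Qed.
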